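(* For every $n\in\mathbb{N}$ and every $l\in\{0,\ldots,n-1\}$ the polynomials $A_n^l$ defined in the context satisfy the two-step recurrence $$A_{n+1}^{l}=\frac{n+1}{2(n-l+1)(n+l+2)}\Big[\big((2n+3)\mathbf{x}+(2n+1)\overline{\mathbf{x}}\big)A_{n}^{l}-2n\,\mathbf{x}\overline{\mathbf{x}}\,A_{n-1}^{l}\Big],$$ and for every $l\in\mathbb{N}_0$, $$A_{l+1}^{l}=\tfrac14\big[(2l+3)\mathbf{x}+(2l+1)\overline{\mathbf{x}}\big]A_{l}^{l},\qquad A_{l}^{l}=(x_1-x_2\mathbf{e}_3)^l .$$
   Context: $\mathbb{H}$: real quaternions with basis $\mathbf{e}_0=1,\mathbf{e}_1,\mathbf{e}_2,\mathbf{e}_3$, $\mathbf{e}_i\mathbf{e}_j+\mathbf{e}_j\mathbf{e}_i=-2\delta_{ij}$ ($i,j=1,2,3$), $\mathbf{e}_1\mathbf{e}_2=\mathbf{e}_3$. A point $(x_0,x_1,x_2)\in\mathbb{R}^3$ is identified with $\mathbf{x}=x_0+x_1\mathbf{e}_1+x_2\mathbf{e}_2$, and $\overline{\mathbf{x}}=x_0-x_1\mathbf{e}_1-x_2\mathbf{e}_2$. Spherical coordinates: $x_0=r\cos\theta$, $x_1=r\sin\theta\cos\varphi$, $x_2=r\sin\theta\sin\varphi$. Let $P_k$ be the Legendre polynomials and $P_k^m(t)=(1-t^2)^{m/2}\frac{d^m}{dt^m}P_k(t)$ (no Condon–Shortley phase; $P_k^m=0$ for $m>k$). For $n\in\mathbb{N}_0$,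 $0\le m\le n+1$ put $$\mathcal{A}^{m,n}(\theta)=\tfrac12\Big(\sin^2\theta\,\tfrac{d}{dt}[P_{n+1}^m(t)]_{t=\cos\theta}+(n+1)\cos\theta\,P_{n+1}^m(\cos\theta)\Big).$$ For $n\in\mathbb{N}_0$, $l=0,\ldots,n$ define $$A_n^l(\mathbf{x})=\frac{2^{l+1}n!\,r^n}{(n+l+2)!}\Big[(n+l+2)\mathcal{A}^{l,n}(\theta)\big(\cos l\varphi-\sin l\varphi\,\mathbf{e}_3\big)+\mathcal{A}^{l+1,n}(\theta)\big(\cos((l+1)\varphi)\,\mathbf{e}_1+\sin((l+1)\varphi)\,\mathbf{e}_2\big)\Big],$$ a homogeneous polynomial of degree $n$ in $x_0,x_1,x_2$. *)

From HB Require Import structures.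
From mathcomp Require Import all_boot all_order all_algebra.
From mathcomp Require Import all_classical all_reals.
From mathcomp Require Import topology normedtype derive trigo.
Set Implicit Arguments. Unset Strict Implicit. Unset Printing Implicit Defensive.
Import Order.TTheory GRing.Theory Num.Theory numFieldNormedType.Exports.
Local Open Scope ring_scope.

Section Defs.
Variable R : realType.

Record quat := Quat { q0 : R; q1 : R; q2 : R; q3 : R }.

Definition qadd (p q : quat) : quat :=
  Quat (q0 p + q0 q) (q1 p + q1 q) (q2 p + q2 q) (q3 p + q3 q).

Definition qsub (p q : quat) : quat :=
  Quat (q0 p - q0 q) (q1 p - q1 q) (q2 p - q2 q) (q3 p - q3 q).

Definition qscale (c : R) (q : quat) : quat :=
  Quat (c * q0 q) (c * q1 q) (c * q2 q) (c * q3 q).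

(* Hamilton product: e_i e_i = -1, e1 e2 = e3, e2 e3 = e1, e3 e1 = e2. *)
Definition qmul (p q : quat) : quat :=
  Quat (q0 p * q0 q - q1 p * q1 q - q2 p * q2 q - q3 p * q3 q)
       (q0 p * q1 q + q1 p * q0 q + q2 p * q3 q - q3 p * q2 q)
       (q0 p * q2 q - q1 p * q3 q + q2 p * q0 q + q3 p * q1 q)
       (q0 p * q3 q + q1 p * q2 q - q2 p * q1 q + q3 p * q0 q).

Definition qone : quat := Quat 1 0 0 0.

Definition qpow (q : quat) (k : nat) : quat := iter k (qmul q) qone.

Definition legendre (k : nat) : {poly R} :=
  ((2 ^+ k * (k`!)%:R)^-1) *: (('X ^+ 2 - 1) ^+ k)^`(k).

(* Associated Legendre function without Condon-Shortley phase:
   P_k^m(t) = (1-t^2)^{m/2} d^m/dt^m P_k(t). *)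
Definition assoc_legendre (k m : nat) (t : R) : R :=
  (Num.sqrt (1 - t ^+ 2)) ^+ m * ((legendre k)^`(m)).[t].

Definition calA (m n : nat) (theta : R) : R :=
  2^-1 * ((sin theta) ^+ 2 * derive1 (assoc_legendre n.+1 m) (cos theta)
          + n.+1%:R * cos theta * assoc_legendre n.+1 m (cos theta)).

Definition Anl (n l : nat) (r theta phi : R) : quat :=
  let c := 2 ^+ l.+1 * (n`!)%:R * r ^+ n / ((n + l + 2)`!)%:R in
  let a := (n + l + 2)%:R * calA l n theta in
  let b := calA l.+1 n theta in
  qscale c (Quat (a * cos (l%:R * phi)) (b * cos (l.+1%:R * phi))
                 (b * sin (l.+1%:R * phi)) (- (a * sin (l%:R * phi)))).

(* x = x0 + x1 e1 + x2 e2 and its conjugate, in spherical coordinates. *)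
Definition xq (r theta phi : R) : quat :=
  Quat (r * cos theta) (r * sin theta * cos phi) (r * sin theta * sin phi) 0.

Definition xbarq (r theta phi : R) : quat :=
  Quat (r * cos theta) (- (r * sin theta * cos phi)) (- (r * sin theta * sin phi)) 0.

End Defs.

(* Write t = cos theta. Rodrigues' formula gives the Legendre identities
   P_{k+1}^(m+1) = t P_k^(m+1) + (k+m+1) P_k^(m)  and
   t P_{k+1}^(m+1) + m P_{k+1}^(m) = P_k^(m+1) + (k+1) P_{k+1}^(m),
   and differentiating (1-t^2)^(m/2) P_k^(m)(t) turns the definition of
   calA into  calA^{m,n}(theta) = (n+m+1)/2 sin^m theta P_n^(m)(cos theta).
   Hence A_n^l = a (cos l phi - sin l phi e3) + b (cos (l+1)phi e1 + sin (l+1)phi e2)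
   with a, b explicit in P_n^(l), P_n^(l+1) at cos theta.  Left multiplication
   by x, xbar and x xbar = r^2 preserves this shape and acts on (a, b) by
   explicit 2x2 matrices, so both recurrences reduce to the two Legendre
   identities above.  For l = n, P_n^(n+1) = 0 and P_n^(n) = (2n)!/(2^n n!) is
   constant, which gives A_l^l = (x1 - x2 e3)^l by de Moivre. *)

From HB Require Import structures.
From mathcomp Require Import all_boot all_order all_algebra.
From mathcomp Require Import all_classical all_reals.
From mathcomp Require Import topology normedtype derive trigo realfun.
From mathcomp Require Import ring lra zify.
Import Order.TTheory GRing.Theory Num.Theory numFieldNormedType.Exports.
Local Open Scope ring_scope.

(* [linear_combination]-style certificates, closed by [ring]. *)
Lemma eq_lincomb1 {T : comNzRingType} {e1 e2 a1 b1 : T} (k1 : T) :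
  a1 = b1 -> e1 - e2 = k1 * (a1 - b1) -> e1 = e2.
Proof. by move=> ->; rewrite subrr mulr0 => /eqP; rewrite subr_eq0 => /eqP. Qed.

Lemma eq_lincomb2 {T : comNzRingType} {e1 e2 a1 b1 a2 b2 : T} (k1 k2 : T) :
  a1 = b1 -> a2 = b2 -> e1 - e2 = k1 * (a1 - b1) + k2 * (a2 - b2) -> e1 = e2.
Proof.
by move=> -> ->; rewrite !subrr !mulr0 addr0 => /eqP; rewrite subr_eq0 => /eqP.
Qed.

Lemma derivn_derivn (R : nzRingType) (p : {poly R}) a b : p^`(a)^`(b) = p^`(b + a).
Proof. by rewrite /derivn iterD. Qed.

Lemma derivnXM (R : comNzRingType) (p : {poly R}) j :
  ('X * p)^`(j.+1) = 'X * p^`(j.+1) + p^`(j) *+ j.+1.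
Proof.
by rewrite mulrC -[p * 'X]addr0 -polyC0 derivnMXaddC addrC mulrC.
Qed.

Lemma fact_addnnSS l : ((l + l + 2)`! = (l + l).+2 * ((l + l).+1 * (l + l)`!))%N.
Proof. by rewrite -!factS; congr factorial; lia. Qed.

Section Legendre.
Variable R : realType.
Local Notation P k := (legendre R k).
Local Notation U k := (('X^2 - 1 : {poly R}) ^+ k).

Lemma deriv_U k : (U k.+1)^`() = ('X * U k) *+ (2 * k.+1).
Proof. by rewrite deriv_exp derivB derivXn derivC subr0 /= expr1; ring. Qed.

Lemma mulX2_U k : 'X^2 * U k = U k.+1 + U k.
Proof. by rewrite (exprS _ k); ring. Qed.

Lemma derivn_US k : (U k.+1)^`(k.+2) =
  ('X * (U k)^`(k.+1) + (U k)^`(k) *+ k.+1) *+ (2 * k.+1).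
Proof. by rewrite derivSn deriv_U derivnMn derivnXM. Qed.

Lemma derivn_USS k : (U k.+2)^`(k.+3) =
  (U k.+1)^`(k.+1) *+ (2 * k.+2 * (2 * k + 3)) + (U k)^`(k.+1) *+ (4 * k.+1 * k.+2).
Proof.
have U2 : (U k.+2)^`()^`() =
    U k.+1 *+ (2 * k.+2 * (2 * k + 3)) + U k *+ (4 * k.+1 * k.+2).
  rewrite deriv_U derivMn derivM derivX mul1r deriv_U mulrnAr mulrA -expr2 mulX2_U.
  ring.
by rewrite !derivSn U2 derivD !derivMn derivnD !derivnMn.
Qed.

Definition rodrigues_coef k : R := (2 ^+ k * (k`!)%:R)^-1.

Lemma legendreE k : P k = (rodrigues_coef k)%:P * (U k)^`(k).
Proof. by rewrite mul_polyC. Qed.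

Lemma fact_neq0 k : (k`!)%:R != 0 :> R.
Proof. by rewrite pnatr_eq0 -lt0n fact_gt0. Qed.

Lemma rodrigues_coefS k : rodrigues_coef k.+1 *+ (2 * k.+1) = rodrigues_coef k.
Proof.
rewrite /rodrigues_coef factS natrM exprS -[_ *+ (2 * k.+1)]mulr_natr natrM.
have := fact_neq0 k; have : k.+1%:R != 0 :> R by rewrite pnatr_eq0.
by move=> h1 h2; field; rewrite h2 expf_neq0 ?pnatr_eq0 // addrC natr1.
Qed.

Lemma rodrigues_coefSS k :
  rodrigues_coef k.+2 *+ (4 * k.+1 * k.+2) = rodrigues_coef k.
Proof.
by rewrite -(rodrigues_coefS k) -(rodrigues_coefS k.+1) -!mulrnA; congr (_ *+ _); lia.
Qed.

Lemma deriv_legendreS k : (P k.+1)^`() = 'X * (P k)^`() + P k *+ k.+1.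
Proof.
rewrite !legendreE !derivM !derivC !mul0r !add0r -!derivnS derivn_US.
by rewrite -(rodrigues_coefS k) polyCMn; ring.
Qed.

Lemma deriv_legendreSS k : (P k.+2)^`() = P k.+1 *+ (2 * k + 3) + (P k)^`().
Proof.
rewrite !legendreE !derivM !derivC !mul0r !add0r -!derivnS derivn_USS.
by rewrite -(rodrigues_coefSS k) -(rodrigues_coefS k.+1) !polyCMn; ring.
Qed.

Lemma mulX_deriv_legendreS k : 'X * (P k.+1)^`() = (P k)^`() + P k.+1 *+ k.+1.
Proof.
have := deriv_legendreSS k; rewrite deriv_legendreS => h.
by apply: (eq_lincomb1 1 h); ring.
Qed.

Lemma derivn_legendreS k m :
  (P k.+1)^`(m.+1) = 'X * (P k)^`(m.+1) + (P k)^`(m) *+ (k.+1 + m).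
Proof.
elim: m => [|m IH]; first by rewrite derivn1 derivn0 deriv_legendreS addn0.
rewrite derivnS IH derivD derivMn derivM derivX mul1r -!derivnS; ring.
Qed.

Lemma mulX_derivn_legendreS k m :
  'X * (P k.+1)^`(m.+1) + (P k.+1)^`(m) *+ m = (P k)^`(m.+1) + (P k.+1)^`(m) *+ k.+1.
Proof.
elim: m => [|m IH].
  by rewrite derivn1 derivn0 mulX_deriv_legendreS mulr0n addr0.
have := congr1 deriv IH; rewrite !derivD !derivMn derivM derivX mul1r -!derivnS => h.
by rewrite mulrS; apply: (eq_lincomb1 1 h); ring.
Qed.

Lemma size_U k : size (U k) = (2 * k).+1.
Proof.
have s1 : size ('X^2 - 1 : {poly R}) = 3 by rewrite -polyC1 size_XnsubC.
have := size_exp ('X^2 - 1 : {poly R}) k; rewrite s1 /= => <-.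
by rewrite prednK // lt0n size_poly_eq0 expf_neq0 // -size_poly_eq0 s1.
Qed.

Lemma lead_coef_U k : lead_coef (U k) = 1.
Proof.
by rewrite lead_coef_exp -polyC1 (monicP (monicXnsubC _ _)) // expr1n.
Qed.

Lemma derivn_legendre_eq0 k : (P k)^`(k.+1) = 0.
Proof.
by rewrite /legendre derivnZ derivn_derivn derivn_poly0 ?scaler0 // size_U; lia.
Qed.

Lemma derivn_legendre_deg k : (P k)^`(k) = ((k.*2)`!%:R * rodrigues_coef k)%:P.
Proof.
rewrite /legendre derivnZ derivn_derivn.
have hs : (size ((U k)^`(k + k)) <= 1)%N.
  apply/leq_sizeP => j hj; rewrite coef_derivn nth_default ?mul0rn // size_U; lia.
rewrite (size1_polyC hs) coef_derivn addn0.
have -> : (U k)`_(k + k) = 1 by rewrite -(lead_coef_U k) lead_coefE size_U addnn -mul2n.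
by rewrite ffactnn addnn scale_polyC mulrC.
Qed.

End Legendre.

Section AssociatedLegendre.
Variable R : realType.
Local Notation P k := (legendre R k).

Lemma horner_derivn_legendreS k m (t : R) :
  ((P k.+1)^`(m.+1)).[t] = t * ((P k)^`(m.+1)).[t] + ((P k)^`(m)).[t] *+ (k.+1 + m).
Proof. by rewrite derivn_legendreS !hornerE hornerMn. Qed.

Lemma horner_mulX_derivn_legendreS k m (t : R) :
  t * ((P k.+1)^`(m.+1)).[t] + ((P k.+1)^`(m)).[t] *+ m
  = ((P k)^`(m.+1)).[t] + ((P k.+1)^`(m)).[t] *+ k.+1.
Proof.
by have := congr1 (horner^~ t) (mulX_derivn_legendreS R k m); rewrite !hornerE !hornerMn.
Qed.

Lemma derivn_legendre_raise n l (t : R) : (l <= n)%N ->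
  ((P n.+1)^`(l)).[t] =
  ((n + l).+1%:R * t * ((P n)^`(l)).[t] - (1 - t ^+ 2) * ((P n)^`(l.+1)).[t])
  / (n.+1%:R - l%:R).
Proof.
move=> le_ln; have nz : n.+1%:R - l%:R != 0 :> R by rewrite -natrB ?pnatr_eq0; lia.
apply: (canRL (mulfK nz)).
have g1 := horner_derivn_legendreS n l t; have g2 := horner_mulX_derivn_legendreS n l t.
by apply: (eq_lincomb2 t (-1) g1 g2); ring.
Qed.

Lemma derivn_legendre_lower m l (t : R) :
  ((P m)^`(l)).[t] =
  ((1 - t ^+ 2) * ((P m.+1)^`(l.+1)).[t] + (m.+1%:R - l%:R) * t * ((P m.+1)^`(l)).[t])
  / (m.+1 + l)%:R.
Proof.
have nz : (m.+1 + l)%:R != 0 :> R by rewrite pnatr_eq0 addSn.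
apply: (canRL (mulfK nz)).
have g1 := horner_derivn_legendreS m l t; have g2 := horner_mulX_derivn_legendreS m l t.
by apply: (eq_lincomb2 (-1) t g1 g2); ring.
Qed.

Lemma derivnS_legendre_lower m l (t : R) :
  ((P m)^`(l.+1)).[t] =
  t * ((P m.+1)^`(l.+1)).[t] + ((P m.+1)^`(l)).[t] *+ l - ((P m.+1)^`(l)).[t] *+ m.+1.
Proof.
have g2 := horner_mulX_derivn_legendreS m l t.
by apply: (eq_lincomb1 (-1) g2); ring.
Qed.

Lemma sqrt_1subcos2 (th : R) : 0 <= th <= pi -> Num.sqrt (1 - cos th ^+ 2) = sin th.
Proof. by move=> h; rewrite -sin2cos2 sqrtr_sqr ger0_norm // sin_ge0_pi. Qed.

Lemma assoc_legendre_cos k m (th : R) : 0 <= th <= pi ->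
  assoc_legendre k m (cos th) = sin th ^+ m * ((P k)^`(m)).[cos th].
Proof. by move=> h; rewrite /assoc_legendre sqrt_1subcos2. Qed.

Lemma sin2_derive1_assoc_legendre k m (th : R) : 0 <= th <= pi ->
  sin th ^+ 2 * derive1 (@assoc_legendre R k m) (cos th) =
  sin th ^+ m * (sin th ^+ 2 * ((P k)^`(m.+1)).[cos th]
                 - m%:R * cos th * ((P k)^`(m)).[cos th]).
Proof.
move=> hth; have s_ge0 : 0 <= sin th by apply: sin_ge0_pi.
have [s0|s_neq0] := eqVneq (sin th) 0.
  by rewrite s0 expr0n /= !mul0r; case: m => [|m]; rewrite ?expr0n /= ?mul0r //; ring.
set t := cos th; set p := (1 - 'X^2 : {poly R}); set Q := (P k)^`(m).
have pt : p.[t] = sin th ^+ 2 by rewrite /p !hornerE sin2cos2.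
have p_gt0 : 0 < p.[t] by rewrite pt exprn_gt0 // lt_neqAle eq_sym s_neq0.
have dp : is_derive t 1 (horner p) p^`().[t] := is_derive_poly _ _.
have dQ : is_derive t 1 (horner Q) Q^`().[t] := is_derive_poly _ _.
have dsqrt := is_derive1_comp (is_derive1_sqrt p_gt0) dp.
have dassoc := is_deriveM (is_deriveX m dsqrt) dQ.
have -> : @assoc_legendre R k m = (Num.sqrt \o horner p) ^+ m * horner Q.
  by apply/funext => x; rewrite /assoc_legendre exprfctE mulrfctE /= /p !hornerE.
have scaleE (a b : R) : a *: b = a * b by [].
rewrite derive1E derive_val /= exprfctE /= pt sqrtr_sqr ger0_norm // !scaleE.
rewrite /Q -!derivnS /p derivB derivC derivXn /= !hornerE /=.
case: m {Q dQ dassoc} => [|m]; first by rewrite /= !mul0r; ring.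
by rewrite (exprS (sin th) m) /=; field.
Qed.

Lemma calAE m n (th : R) : 0 <= th <= pi ->
  calA m n th = (n + m).+1%:R / 2 * sin th ^+ m * ((P n)^`(m)).[cos th].
Proof.
move=> hth; rewrite /calA sin2_derive1_assoc_legendre // assoc_legendre_cos // sin2cos2.
have g1 := horner_derivn_legendreS n m (cos th).
have g2 := horner_mulX_derivn_legendreS n m (cos th).
by apply: (eq_lincomb2 (sin th ^+ m / 2) (- cos th * sin th ^+ m / 2) g1 g2); ring.
Qed.

End AssociatedLegendre.

Section Quaternions.
Variable R : realType.
Implicit Types (r th phi a b c : R).

Definition harmq (l : nat) phi a b : quat R :=
  Quat (a * cos (l%:R * phi)) (b * cos (l.+1%:R * phi))
       (b * sin (l.+1%:R * phi)) (- (a * sin (l%:R * phi))).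

Lemma qscale_harmq c l phi a b : qscale c (harmq l phi a b) = harmq l phi (c * a) (c * b).
Proof. by rewrite /qscale /harmq /=; congr Quat; ring. Qed.

Lemma qsub_harmq l phi a b a' b' :
  qsub (harmq l phi a b) (harmq l phi a' b') = harmq l phi (a - a') (b - b').
Proof. by rewrite /qsub /harmq /=; congr Quat; ring. Qed.

Lemma qmul_real_harmq c l phi a b :
  qmul (Quat c 0 0 0) (harmq l phi a b) = harmq l phi (c * a) (c * b).
Proof. by rewrite /qmul /harmq /=; congr Quat; ring. Qed.

Lemma natrS_mul (l : nat) phi : l.+1%:R * phi = l%:R * phi + phi.
Proof. by rewrite mulrSr mulrDl mul1r. Qed.

Lemma qmul_harmq c w l phi a b :
  qmul (Quat c (w * cos phi) (w * sin phi) 0) (harmq l phi a b) =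
  harmq l phi (c * a - w * b) (c * b + w * a).
Proof.
rewrite /qmul /harmq /= natrS_mul cosD sinD; have h := cos2Dsin2 phi.
congr Quat; try ring.
  by apply: (eq_lincomb1 (- (w * b * cos (l%:R * phi))) h); ring.
by apply: (eq_lincomb1 (w * b * sin (l%:R * phi)) h); ring.
Qed.

Lemma qadd_scale_xq_xbarq a b r th phi :
  qadd (qscale a (xq r th phi)) (qscale b (xbarq r th phi)) =
  Quat ((a + b) * (r * cos th)) ((a - b) * (r * sin th) * cos phi)
       ((a - b) * (r * sin th) * sin phi) 0.
Proof. by rewrite /qadd /qscale /xq /xbarq /=; congr Quat; ring. Qed.

Lemma xq_mul_xbarq r th phi : qmul (xq r th phi) (xbarq r th phi) = Quat (r ^+ 2) 0 0 0.
Proof.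
rewrite /qmul /xq /xbarq /=; congr Quat; try ring.
have h1 := cos2Dsin2 th; have h2 := cos2Dsin2 phi.
by apply: (eq_lincomb2 (r ^+ 2 * sin th ^+ 2) (r ^+ 2) h2 h1); ring.
Qed.

Lemma qpow_polar (rho phi : R) l :
  qpow (Quat (rho * cos phi) 0 0 (- (rho * sin phi))) l =
  Quat (rho ^+ l * cos (l%:R * phi)) 0 0 (- (rho ^+ l * sin (l%:R * phi))).
Proof.
elim: l => [|l IH]; first by rewrite /qpow /= mul0r cos0 sin0 /qone; congr Quat; ring.
rewrite /qpow iterS -/(qpow _ l) IH /qmul /= natrS_mul cosD sinD exprS.
by congr Quat; ring.
Qed.

Lemma AnlE n l r th phi : 0 <= th <= pi ->
  Anl n l r th phi =
  qscale (2 ^+ l.+1 * (n`!)%:R * r ^+ n / ((n + l + 2)`!)%:R)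
    (harmq l phi
       ((n + l + 2)%:R * (n + l).+1%:R / 2 * sin th ^+ l
          * ((legendre R n)^`(l)).[cos th])
       ((n + l.+1).+1%:R / 2 * sin th ^+ l.+1 * ((legendre R n)^`(l.+1)).[cos th])).
Proof.
by move=> hth; rewrite /Anl !calAE //; congr qscale; rewrite /harmq; congr Quat; ring.
Qed.

End Quaternions.

Section Recurrences.
Variables (R : realType) (r th phi : R).
Hypothesis th_range : 0 <= th <= pi.

Lemma Anl_recurrence n l : (0 < n)%N -> (l < n)%N ->
  Anl n.+1 l r th phi =
  qscale (n.+1%:R / (2 * (n%:R - l%:R + 1) * (n + l + 2)%:R))
    (qsub
       (qmul (qadd (qscale (2 * n%:R + 3) (xq r th phi))
                   (qscale (2 * n%:R + 1) (xbarq r th phi)))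
             (Anl n l r th phi))
       (qscale (2 * n%:R)
          (qmul (qmul (xq r th phi) (xbarq r th phi)) (Anl n.-1 l r th phi)))).
Proof.
case: n => [//|m] _ lt_lm.
rewrite !AnlE // !qscale_harmq qadd_scale_xq_xbarq xq_mul_xbarq qmul_harmq.
rewrite qmul_real_harmq !qscale_harmq qsub_harmq qscale_harmq.
rewrite (derivn_legendre_raise _ _ _ _ (ltnW lt_lm)) (horner_derivn_legendreS _ m.+1).
rewrite (derivn_legendre_lower _ m) (derivnS_legendre_lower _ m) -!sin2cos2.
have -> : (m.+2 + l + 2)`! = ((m + l + 2).+2 * ((m + l + 2).+1 * (m + l + 2)`!))%N.
  by rewrite -!factS; congr factorial; lia.
have -> : (m.+1 + l + 2)`! = ((m + l + 2).+1 * (m + l + 2)`!)%N.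
  by rewrite -!factS; congr factorial; lia.
rewrite (factS m.+1) (factS m) !natrM !exprS.
have := fact_neq0 R (m + l + 2); have := ler0n R m; have := ler0n R l.
have : l%:R <= m%:R :> R by rewrite ler_nat.
move=> le_lm l_ge0 m_ge0 f_neq0.
congr harmq; field; rewrite f_neq0 /=; repeat (apply/andP; split); apply: lt0r_neq0; lra.
Qed.

Lemma Anl_subdiag l :
  Anl l.+1 l r th phi =
  qscale 4^-1
    (qmul (qadd (qscale (2 * l%:R + 3) (xq r th phi))
                (qscale (2 * l%:R + 1) (xbarq r th phi)))
          (Anl l l r th phi)).
Proof.
rewrite !AnlE // !qscale_harmq qadd_scale_xq_xbarq qmul_harmq qscale_harmq.
rewrite (derivn_legendre_raise _ _ _ _ (leqnn l)) (horner_derivn_legendreS _ l).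
rewrite derivn_legendre_eq0 horner0 -!sin2cos2.
have -> : (l.+1 + l + 2)`! = ((l + l).+3 * ((l + l).+2 * ((l + l).+1 * (l + l)`!)))%N.
  by rewrite -!factS; congr factorial; lia.
rewrite fact_addnnSS (factS l) !natrM !exprS.
have := fact_neq0 R (l + l); have := ler0n R l; move=> l_ge0 f_neq0.
congr harmq; field; rewrite f_neq0 /=; repeat (apply/andP; split); apply: lt0r_neq0; lra.
Qed.

Lemma Anl_diag l :
  Anl l l r th phi = qpow (Quat (r * sin th * cos phi) 0 0 (- (r * sin th * sin phi))) l.
Proof.
rewrite AnlE // qscale_harmq derivn_legendre_eq0 horner0 derivn_legendre_deg hornerC.
rewrite qpow_polar /harmq /rodrigues_coef fact_addnnSS -addnn !natrM exprMn (exprS 2 l).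
have := fact_neq0 R (l + l); have := fact_neq0 R l; have := ler0n R l.
move=> l_ge0 fl_neq0 fll_neq0.
congr Quat; try field; rewrite ?fl_neq0 ?fll_neq0 /=;
  try (repeat (apply/andP; split); apply: lt0r_neq0; lra).
all: rewrite expf_neq0 //=; try (apply/andP; split); apply: lt0r_neq0; lra.
Qed.

End Recurrences.

Theorem mainTheorem3 (R : realType) (r theta phi : R)
  (hr : 0 <= r) (ht0 : 0 <= theta) (htpi : theta <= pi) :
  (forall n l : nat, (0 < n)%N -> (l < n)%N ->
     Anl n.+1 l r theta phi =
     qscale (n.+1%:R / (2 * (n%:R - l%:R + 1) * (n + l + 2)%:R))
       (qsub
          (qmul (qadd (qscale (2 * n%:R + 3) (xq r theta phi))
                      (qscale (2 * n%:R + 1) (xbarq r theta phi)))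
                (Anl n l r theta phi))
          (qscale (2 * n%:R)
             (qmul (qmul (xq r theta phi) (xbarq r theta phi))
                   (Anl n.-1 l r theta phi)))))
  /\
  (forall l : nat,
     Anl l.+1 l r theta phi =
       qscale (4^-1)
         (qmul (qadd (qscale (2 * l%:R + 3) (xq r theta phi))
                     (qscale (2 * l%:R + 1) (xbarq r theta phi)))
               (Anl l l r theta phi))
     /\
     Anl l l r theta phi =
       qpow (Quat (r * sin theta * cos phi) 0 0 (- (r * sin theta * sin phi))) l).
Proof.
have th_range : 0 <= theta <= pi by rewrite ht0 htpi.
split; first exact: Anl_recurrence.
by move=> l; split; [exact: Anl_subdiag | exact: Anl_diag].
Qed.
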